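(* For every integer $r$ and every integer $n\ge 0$, \[ 2\sum_{j=0}^{n}(-1)^{rj}4^jF_r^{2n-2j}5^{n-j}=\sum_{j=0}^{n}\left(\frac{L_r^2}{2}\right)^j\left(5^{n-j}F_r^{2(n-j)}+(-1)^{r(n-j)}4^{n-j}\right)=2\,\frac{(5F_r^2)^{n+1}-(-1)^{r(n+1)}4^{n+1}}{5F_r^2-(-1)^r4}. \]
   Context: $F_n$ and $L_n$ denote the Fibonacci and Lucas numbers, defined for all integers $n$ by $F_0=0,F_1=1$, $L_0=2,L_1=1$ and $x_n=x_{n-1}+x_{n-2}$; equivalently $F_n=(\alpha^n-\beta^n)/(\alpha-\beta)$, $L_n=\alpha^n+\beta^n$ with $\alpha=(1+\sqrt5)/2$, $\beta=(1-\sqrt5)/2$. In particular $F_{-n}=(-1)^{n-1}F_n$ and $L_{-n}=(-1)^nL_n$. *)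

From HB Require Import structures.
From mathcomp Require Import all_boot all_order all_algebra.
Set Implicit Arguments. Unset Strict Implicit. Unset Printing Implicit Defensive.
Import Order.TTheory GRing.Theory Num.Theory.

Fixpoint fibn_aux (k : nat) : nat * nat :=
  match k with
  | 0 => (0, 1)
  | k'.+1 => let: (a, b) := fibn_aux k' in (b, a + b)
  end%N.
Definition fibn (k : nat) : nat := (fibn_aux k).1.
Definition lucn (k : nat) : nat := (2 * fibn k.+1 - fibn k)%N. (* L_k = F_{k-1}+F_{k+1} = 2F_{k+1}-F_k *)

Local Open Scope ring_scope.

(* Extension to all integers: F_{-m} = (-1)^{m-1} F_m, L_{-m} = (-1)^m L_m.
   Negz k denotes -(k+1). *)
Definition Fib (z : int) : int :=
  match z with
  | Posz k => (fibn k)%:Z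
  | Negz k => (-1) ^+ k * (fibn k.+1)%:Z
  end.
Definition Luc (z : int) : int :=
  match z with
  | Posz k => (lucn k)%:Z
  | Negz k => (-1) ^+ k.+1 * (lucn k.+1)%:Z
  end.

Goal [seq fibn k | k <- iota 0 10] = [:: 0; 1; 1; 2; 3; 5; 8; 13; 21; 34]%N. Proof. by []. Qed.
Goal [seq lucn k | k <- iota 0 8] = [:: 2; 1; 3; 4; 7; 11; 18; 29]%N. Proof. by []. Qed.
Goal [seq Fib (Negz k) | k <- iota 0 5] = [:: 1; -1; 2; -3; 5]. Proof. by []. Qed.
Goal [seq Luc (Negz k) | k <- iota 0 5] = [:: -1; 3; -4; 7; -11]. Proof. by []. Qed.

(* Put a = 5 F_r^2 and b = (-1)^r 4.  The Lucas identity L_r^2 = 5 F_r^2 + 4 (-1)^r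
   says that L_r^2 / 2 is the mean of a and b, and the three sides are then
   2 sum_j b^j a^(n-j),  sum_j ((a+b)/2)^j (a^(n-j) + b^(n-j))  and
   2 (a^(n+1) - b^(n+1)) / (a - b), which agree for any a, b of a commutative ring
   (with a - b invertible for the last one).  Here a - b never vanishes, as 5 F^2
   cannot equal 4 or -4. *)
From HB Require Import structures.
From mathcomp Require Import all_boot all_order all_algebra.
From mathcomp Require Import ring zify.
Import Order.TTheory GRing.Theory Num.Theory.
Local Open Scope ring_scope.

Lemma fibnSS k : fibn k.+2 = (fibn k.+1 + fibn k)%N.
Proof. by rewrite /fibn /=; case: (fibn_aux k) => a b /=; rewrite addnC. Qed.

Lemma leq_fibnS k : (fibn k <= fibn k.+1)%N.
Proof. by case: k => [|k] //; rewrite fibnSS leq_addr. Qed.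

Lemma fibn_cassini k :
  (fibn k.+1)%:Z ^+ 2 - (fibn k.+1)%:Z * (fibn k)%:Z - (fibn k)%:Z ^+ 2 = (-1) ^+ k.
Proof. by elim: k => [|k IHk] //; rewrite fibnSS PoszD (exprS (-1)) -IHk; ring. Qed.

Lemma lucnE k : (lucn k)%:Z = 2 * (fibn k.+1)%:Z - (fibn k)%:Z.
Proof. by rewrite /lucn subzn //; have := leq_fibnS k; lia. Qed.

Lemma lucn_sqr k : (lucn k)%:Z ^+ 2 = 5 * (fibn k)%:Z ^+ 2 + (-1) ^+ k * 4.
Proof. by rewrite lucnE -fibn_cassini; ring. Qed.

Lemma Luc_sqr (r : int) : Luc r ^+ 2 = 5 * Fib r ^+ 2 + (-1) ^+ `|r|%N * 4.
Proof.
case: r => k /=; first exact: lucn_sqr.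
by rewrite !exprMn !sqrr_sign !mul1r lucn_sqr.
Qed.

Lemma five_sqr_neq_sign4 (f : int) (m : nat) : 5 * f ^+ 2 != (-1) ^+ m * 4.
Proof.
rewrite -signr_odd expr2; apply/eqP.
by case: (odd m); rewrite /= ?expr0 ?expr1; nia.
Qed.

Section PowerSums.
Variables (R : comPzRingType) (a b : R).

Lemma mulr_sub_sum_powers n :
  (a - b) * \sum_(0 <= j < n.+1) b ^+ j * a ^+ (n - j) = a ^+ n.+1 - b ^+ n.+1.
Proof.
rewrite subrXX big_mkord; congr (_ * _).
by apply: eq_bigr => j _; rewrite mulrC.
Qed.

Lemma sum_mean_powers (c : R) : 2 * c = a + b -> forall n,
  \sum_(0 <= j < n.+1) c ^+ j * (a ^+ (n - j) + b ^+ (n - j))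
  = 2 * \sum_(0 <= j < n.+1) b ^+ j * a ^+ (n - j).
Proof.
move=> c_mean; elim=> [|n IHn]; first by rewrite !big_nat1 subnn !mulr1 mul1r.
have peel (F : nat -> R) (x : R) :
    \sum_(0 <= j < n.+2) x ^+ j * F (n.+1 - j)%N
    = F n.+1 + x * \sum_(0 <= j < n.+1) x ^+ j * F (n - j)%N.
  rewrite big_nat_recl // subn0 mul1r big_distrr; congr (_ + _).
  by apply: eq_bigr => j _; rewrite subSS exprS -mulrA.
rewrite (peel (fun k => a ^+ k + b ^+ k)) (peel (fun k => a ^+ k)) IHn.
have geom := mulr_sub_sum_powers n.
rewrite mulrA [c * 2]mulrC c_mean.
set t := \sum_(0 <= j < n.+1) _ in geom *.
have -> : (a + b) * t = 2 * b * t + (a - b) * t by ring.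
by rewrite geom; ring.
Qed.

End PowerSums.

Theorem theorem6 (r : int) (n : nat) :
  2 * \sum_(0 <= j < n.+1)
        (-1 : rat) ^ (r * j%:Z) * 4 ^+ j * (Fib r)%:~R ^+ (2 * n - 2 * j) * 5 ^+ (n - j)
  = \sum_(0 <= j < n.+1)
        ((Luc r)%:~R ^+ 2 / 2) ^+ j
        * (5 ^+ (n - j) * (Fib r)%:~R ^+ (2 * (n - j)) + (-1 : rat) ^ (r * (n - j)%:Z) * 4 ^+ (n - j))
  /\
  \sum_(0 <= j < n.+1)
        ((Luc r)%:~R ^+ 2 / 2) ^+ j
        * (5 ^+ (n - j) * (Fib r)%:~R ^+ (2 * (n - j)) + (-1 : rat) ^ (r * (n - j)%:Z) * 4 ^+ (n - j))
  = 2 * (((5 * (Fib r)%:~R ^+ 2) ^+ n.+1 - (-1 : rat) ^ (r * n.+1%:Z) * 4 ^+ n.+1)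
         / (5 * (Fib r)%:~R ^+ 2 - (-1 : rat) ^ r * 4)).
Proof.
set f : rat := (Fib r)%:~R; set a := 5 * f ^+ 2; set b := (-1 : rat) ^ r * 4.
have powb m : (-1 : rat) ^ (r * m%:Z) * 4 ^+ m = b ^+ m by rewrite -exprz_exp exprMn.
have powa m : 5 ^+ m * f ^+ (2 * m) = a ^+ m by rewrite exprMn exprM.
set c := (Luc r)%:~R ^+ 2 / 2.
have mean : 2 * c = a + b.
  rewrite mulrC divfK ?pnatr_eq0 // -rmorphXn Luc_sqr /b expN1r.
  by rewrite rmorphD !rmorphM !rmorphXn rmorphN1.
have a_neq_b : a - b != 0.
  have -> : a - b = (5 * Fib r ^+ 2 - (-1) ^+ `|r|%N * 4)%:~R.
    by rewrite rmorphB !rmorphM !rmorphXn rmorphN1 /b expN1r.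
  by rewrite intr_eq0 subr_eq0 five_sqr_neq_sign4.
rewrite [X in 2 * X = _](eq_bigr (fun j => b ^+ j * a ^+ (n - j))); last first.
  by move=> j _; rewrite powb -mulnBr -mulrA [_ * 5 ^+ _]mulrC powa.
set S := \sum_(0 <= j < n.+1) c ^+ j * _.
have -> : S = \sum_(0 <= j < n.+1) c ^+ j * (a ^+ (n - j) + b ^+ (n - j)).
  by apply: eq_bigr => j _; rewrite powa powb.
rewrite sum_mean_powers // powb; split=> //; congr (_ * _).
by apply: (canRL (mulfK a_neq_b)); rewrite mulrC mulr_sub_sum_powers.
Qed.
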